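(* Let $n\equiv 3\pmod 4$. Then $\{y_1,\ldots,y_n\}$ is a generating set of $\mathcal{AM}_n$ of minimum size. In particular, $\mathcal{AM}_n$ has rank $n$.
   Context: Let $\Omega_n=\{1<2<\cdots<n\}$ and $\mathcal{I}_n$ the monoid of all partial injective maps of $\Omega_n$, written on the right and composed left to right. $\mathcal{AI}_n$ is the set of all $\alpha\in\mathcal{I}_n$ with $\alpha=\sigma|_{\mathrm{Dom}(\alpha)}$ for some even permutation $\sigma$; $\mathcal{PMI}_n$ is the set of monotone (order-preserving or order-reversing) elements and $\mathcal{AM}_n=\mathcal{AI}_n\cap\mathcal{PMI}_n$. The rank of a monoid is the minimum size of a generating set. Let $X_i=\Omega_n\setminus\{i\}$. For $1\leqslant i\leqslant n-1$, $y_i$ is the unique order-reversing partial permutation with domain $X_i$ and image $X_{i+1}$, and $y_n$ is the unique order-preserving partial permutation with domain $X_n$ and image $X_1$. *)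

From mathcomp Require Import all_boot all_fingroup.
Set Implicit Arguments. Unset Strict Implicit. Unset Printing Implicit Defensive.

(* Omega_n = {1 < ... < n} is modelled by 'I_n = {0 < ... < n-1}
   (point i of the paper is the ordinal with value i-1). *)

Definition PT (n : nat) := {ffun 'I_n -> option 'I_n}.

(* Composition written on the right, left to right: x (a b) = (x a) b. *)
Definition pcomp n (a b : PT n) : PT n := [ffun x => obind b (a x)].
Definition pid n : PT n := [ffun x => Some x].

Definition pprod n (s : seq (PT n)) : PT n := foldl (@pcomp n) (pid n) s.

Definition pinj n (a : PT n) : bool :=
  [forall x, forall y, (a x != None) ==> (a x == a y) ==> (x == y)].

Definition even_restr n (a : PT n) : bool :=
  [exists s : {perm 'I_n}, ~~ odd_perm s &&
     [forall x, (a x == None) || (a x == Some (s x))]].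

Definition order_preserving n (a : PT n) : bool :=
  [forall x, forall y,
     if (a x, a y) is (Some u, Some v) then (val x < val y) ==> (val u < val v)
     else true].

Definition order_reversing n (a : PT n) : bool :=
  [forall x, forall y,
     if (a x, a y) is (Some u, Some v) then (val x < val y) ==> (val v < val u)
     else true].

Definition In_ n : {set PT n} := [set a | pinj a].
Definition AI n : {set PT n} := [set a in In_ n | even_restr a].
Definition PMI n : {set PT n} :=
  [set a in In_ n | order_preserving a || order_reversing a].
Definition AM n : {set PT n} := AI n :&: PMI n.

Definition generated n (S : {set PT n}) (a : PT n) : Prop :=
  exists s : seq (PT n), all (fun b => b \in S) s /\ a = pprod s.

Definition generates n (S M : {set PT n}) : Prop :=
  S \subset M /\ forall a, a \in M <-> generated S a.

(* The order-preserving (rev = false) / order-reversing (rev = true)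
   bijection from A onto B (A, B of equal size): the k-th smallest element
   of A goes to the k-th smallest (resp. largest) element of B.
   (enum of a set of 'I_n lists it in increasing order.) *)
Definition mono_map n (A B : {set 'I_n}) (rev_ : bool) : PT n :=
  [ffun x => if x \in A then
       Some (nth x (if rev_ then rev (enum B) else enum B) (index x (enum A)))
     else None].

Definition Xs n (j : nat) : {set 'I_n} := [set x : 'I_n | val x != j].

(* y_(k+1) of the paper, for k < n (0-based index k):
   k+1 < n : order-reversing, domain X_(k+1), image X_(k+2);
   k+1 = n : order-preserving, domain X_n, image X_1. *)
Definition ygen n (k : nat) : PT n :=
  if k.+1 < n then mono_map (Xs n k) (Xs n k.+1) true
  else mono_map (Xs n k) (Xs n 0) false.

Definition Ygens n : {set PT n} := [set ygen n (val k) | k : 'I_n].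

(* Write X_i for the complement of the point i, and y_ij for the monotone
   bijection X_i -> X_j that is order-reversing iff i + j is odd.  Reversing
   the n - 1 = 2 (mod 4) points of X_i is an odd permutation, so y_ij is the
   only element of AM_n with domain X_i and image X_j.  As y_ij y_jl = y_il,
   the generators y_i = y_(i,i+1) (indices mod n) yield every y_ij, hence
   every partial identity.  When i + b and c + j are even and b, c are
   adjacent, y_ib y_cj is the order-preserving bijection X_i -> X_j minus one
   point; for j adjacent to i it moves j to i and fixes the rest, and sliding
   points in this way (a bubble sort) produces every monotone map of rank at
   most n - 2.  The only element of rank n is the identity, since reversing
   n = 3 (mod 4) points is odd.  Conversely, a generating set must contain,
   for each i, an element with domain exactly X_i: the first non-identity
   factor in any factorisation of y_i. *)

From mathcomp Require Import all_boot all_fingroup zify.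
(* Imported last so that Defs.pcomp shadows ssrfun.pcomp. *)
From Pilot Require Import Defs.
Set Implicit Arguments. Unset Strict Implicit. Unset Printing Implicit Defensive.

Section PartialInjections.
Variable n : nat.
Implicit Types (a b c : PT n) (A B : {set 'I_n}).

Definition pdom a : {set 'I_n} := [set x | a x != None].
Definition pimg a : {set 'I_n} := [set y | [exists x, a x == Some y]].
Definition pid_on A : PT n := [ffun x => if x \in A then Some x else None].
Definition monotone (t : bool) a :=
  if t then order_reversing a else order_preserving a.

Lemma pdomP a x : reflect (exists u, a x = Some u) (x \in pdom a).
Proof. by rewrite inE; case: (a x) => [u|]; constructor; [exists u | case]. Qed.

Lemma pimgP a y : reflect (exists x, a x = Some y) (y \in pimg a).
Proof. by rewrite inE; apply: (iffP existsP) => -[x /eqP]; exists x. Qed.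

Lemma pinjP a :
  reflect (forall x y u, a x = Some u -> a y = Some u -> x = y) (pinj a).
Proof.
apply: (iffP forallP) => [h x y u ax ay | h x]; last first.
  apply/forallP=> y; apply/implyP; case ax: (a x) => [u|] // _.
  by apply/implyP=> /eqP ay; apply/eqP/(h _ _ u).
by apply/eqP; move/forallP/(_ y): (h x); rewrite ax ay eqxx.
Qed.

Lemma order_preservingP a : reflect
  (forall x y u v, a x = Some u -> a y = Some v -> x < y -> u < v)
  (order_preserving a).
Proof.
apply: (iffP forallP) => [h x y u v ax ay | h x]; last first.
  by apply/forallP=> y; case ax: (a x) => [u|] //; case ay: (a y) => [v|] //;
    apply/implyP/h.
by move/forallP/(_ y): (h x); rewrite ax ay => /implyP.
Qed.

Lemma order_reversingP a : reflect
  (forall x y u v, a x = Some u -> a y = Some v -> x < y -> v < u)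
  (order_reversing a).
Proof.
apply: (iffP forallP) => [h x y u v ax ay | h x]; last first.
  by apply/forallP=> y; case ax: (a x) => [u|] //; case ay: (a y) => [v|] //;
    apply/implyP/h.
by move/forallP/(_ y): (h x); rewrite ax ay => /implyP.
Qed.

Lemma pcompE a b x : pcomp a b x = obind b (a x).
Proof. by rewrite ffunE. Qed.

Lemma pcomp_Some a b x w :
  pcomp a b x = Some w -> exists2 u, a x = Some u & b u = Some w.
Proof. by rewrite pcompE; case: (a x) => [u|] //= bu; exists u. Qed.

Lemma pcompA a b c : pcomp a (pcomp b c) = pcomp (pcomp a b) c.
Proof. by apply/ffunP=> x; rewrite !pcompE; case: (a x) => //= u; rewrite pcompE. Qed.

Lemma pcomp_pidl a : pcomp (pid n) a = a.
Proof. by apply/ffunP=> x; rewrite pcompE ffunE. Qed.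

Lemma pcomp_pidr a : pcomp a (pid n) = a.
Proof. by apply/ffunP=> x; rewrite pcompE; case: (a x) => //= u; rewrite ffunE. Qed.

Lemma pprod_cons a (s : seq (PT n)) : pprod (a :: s) = pcomp a (pprod s).
Proof.
have foldlE c t : foldl (@pcomp n) c t = pcomp c (pprod t).
  elim: t c => [|b t IH] c /=; first by rewrite pcomp_pidr.
  have -> : pprod (b :: t) = foldl (@pcomp n) (pcomp (pid n) b) t by [].
  by rewrite !IH pcomp_pidl pcompA.
by rewrite /pprod /= foldlE pcomp_pidl.
Qed.

Lemma pdom_pcomp_sub a b : pdom (pcomp a b) \subset pdom a.
Proof. by apply/subsetP=> x /pdomP[w /pcomp_Some[u ax _]]; apply/pdomP; exists u. Qed.

Lemma pdom_pcomp a b : pimg a \subset pdom b -> pdom (pcomp a b) = pdom a.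
Proof.
move=> /subsetP sab; apply/eqP; rewrite eqEsubset pdom_pcomp_sub.
apply/subsetP=> x /pdomP[u ax]; have /sab/pdomP[w bu] : u \in pimg a.
  by apply/pimgP; exists x.
by apply/pdomP; exists w; rewrite pcompE ax.
Qed.

Lemma pimg_pcomp a b : pdom b \subset pimg a -> pimg (pcomp a b) = pimg b.
Proof.
move=> /subsetP sba; apply/setP=> w; apply/pimgP/pimgP => [[x /pcomp_Some[u _ bu]]|[u bu]].
  by exists u.
have /sba/pimgP[x ax] : u \in pdom b by apply/pdomP; exists w.
by exists x; rewrite pcompE ax.
Qed.

Lemma monotone_pinj t a : monotone t a -> pinj a.
Proof.
move=> ta; apply/pinjP => x y u ax ay.
case: (ltngtP x y) => [xy | xy | /ord_inj //];
  case: t ta => /= [/order_reversingP | /order_preservingP] h;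
  by first [have := h _ _ _ _ ax ay xy | have := h _ _ _ _ ay ax xy]; rewrite ltnn.
Qed.

Lemma monotone_pcomp t1 t2 a b :
  monotone t1 a -> monotone t2 b -> monotone (t1 (+) t2) (pcomp a b).
Proof.
case: t1 t2 => [] [] /= => [/order_reversingP ha /order_reversingP hb
  | /order_reversingP ha /order_preservingP hb
  | /order_preservingP ha /order_reversingP hb
  | /order_preservingP ha /order_preservingP hb];
  [apply/order_preservingP | apply/order_reversingP
  | apply/order_reversingP | apply/order_preservingP];
  move=> x y u v /pcomp_Some[p ap bp] /pcomp_Some[q aq bq] xy;
  first [exact: hb _ _ _ _ bq bp (ha _ _ _ _ ap aq xy)
        | exact: hb _ _ _ _ bp bq (ha _ _ _ _ ap aq xy)].
Qed.

Lemma even_restr_pcomp a b :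
  even_restr a -> even_restr b -> even_restr (pcomp a b).
Proof.
move=> /existsP[s /andP[es /forallP hs]] /existsP[r /andP[er /forallP hr]].
apply/existsP; exists (s * r)%g; rewrite odd_permM (negbTE es) (negbTE er) /=.
apply/forallP=> x; rewrite pcompE; move: (hs x); case: (a x) => [u|] //=.
by rewrite permM => /eqP[->]; apply: hr.
Qed.

Lemma card_pdom_pimg a : pinj a -> #|pdom a| = #|pimg a|.
Proof.
move=> /pinjP ia; pose f x := odflt x (a x).
have fE x : x \in pdom a -> a x = Some (f x) by move/pdomP=> [u]; rewrite /f => ->.
have -> : pimg a = f @: pdom a.
  apply/setP=> y; apply/pimgP/imsetP => [[x ax]|[x /fE ax ->]]; last by exists x.
  by exists x; [apply/pdomP; exists y | rewrite /f ax].
by rewrite card_in_imset // => x y /fE ax /fE ay fxy; apply: (ia x y (f x)); rewrite ?ay -?fxy.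
Qed.

Lemma pprod_cat (s1 s2 : seq (PT n)) :
  pprod (s1 ++ s2) = pcomp (pprod s1) (pprod s2).
Proof.
elim: s1 => [|a s1 IH] /=; first by rewrite pcomp_pidl.
by rewrite !pprod_cons IH pcompA.
Qed.

Lemma pprod_nontrivial_factor (s : seq (PT n)) : pprod s != pid n ->
  exists2 c, c \in s & (c != pid n) && (pdom (pprod s) \subset pdom c).
Proof.
elim: s => [|a s IH]; first by rewrite eqxx.
rewrite pprod_cons; case: (eqVneq a (pid n)) => [-> | na].
  by rewrite pcomp_pidl => /IH[c cs hc]; exists c; rewrite ?inE ?cs ?orbT.
by move=> _; exists a; rewrite ?inE ?eqxx // na pdom_pcomp_sub.
Qed.

Lemma AMP a :
  reflect [/\ pinj a, even_restr a & exists t, monotone t a] (a \in AM n).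
Proof.
rewrite !inE; apply: (iffP idP) => [/and3P[/andP[ia ea] _ ma] | [ia ea [t ta]]].
  by split=> //; case/orP: ma => ma; [exists false | exists true].
by rewrite ia ea; case: t ta => /= ->; rewrite ?orbT.
Qed.

Lemma AM_pcomp a b : a \in AM n -> b \in AM n -> pcomp a b \in AM n.
Proof.
move=> /AMP[_ ea [t1 ta]] /AMP[_ eb [t2 tb]].
have tab := monotone_pcomp ta tb; apply/AMP; split.
- exact: monotone_pinj tab.
- exact: even_restr_pcomp.
- by exists (t1 (+) t2).
Qed.

Lemma pid_onE A x : pid_on A x = if x \in A then Some x else None.
Proof. by rewrite ffunE. Qed.

Lemma pcomp_pid_onE A a x :
  pcomp (pid_on A) a x = if x \in A then a x else None.
Proof. by rewrite pcompE pid_onE; case: ifP. Qed.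

Lemma pid_onT : pid_on [set: 'I_n] = pid n.
Proof. by apply/ffunP=> x; rewrite pid_onE !ffunE inE. Qed.

Lemma pid_on_pcomp A B : pcomp (pid_on A) (pid_on B) = pid_on (A :&: B).
Proof. by apply/ffunP=> x; rewrite pcomp_pid_onE !pid_onE inE; case: (x \in A). Qed.

Lemma pdom_pid_on A : pdom (pid_on A) = A.
Proof. by apply/setP=> x; rewrite inE pid_onE; case: ifP. Qed.

Lemma pimg_pid_on A : pimg (pid_on A) = A.
Proof.
apply/setP=> y; apply/pimgP/idP => [[x] | yA]; last by exists y; rewrite pid_onE yA.
by rewrite pid_onE; case: ifP => // xA [<-].
Qed.

Lemma monotone_pid_on A : monotone false (pid_on A).
Proof.
by apply/order_preservingP=> x y u v; rewrite !pid_onE; do 2 case: ifP => // _; move=> [<-] [<-].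
Qed.

Lemma even_restr_pid : even_restr (pid n).
Proof.
by apply/existsP; exists 1%g; rewrite odd_perm1; apply/forallP=> x; rewrite ffunE perm1 eqxx orbT.
Qed.

Lemma AM_pid : pid n \in AM n.
Proof.
have tid := monotone_pid_on [set: 'I_n]; rewrite pid_onT in tid.
by apply/AMP; split; [exact: monotone_pinj tid | exact: even_restr_pid | exists false].
Qed.

Section Generated.
Variable S : {set PT n}.

Lemma generated_pid : generated S (pid n).
Proof. by exists [::]. Qed.

Lemma generated_mem a : a \in S -> generated S a.
Proof. by move=> aS; exists [:: a]; rewrite /= aS pprod_cons /pprod /= pcomp_pidr. Qed.

Lemma generated_pcomp a b : generated S a -> generated S b -> generated S (pcomp a b).
Proof.
move=> [s1 [h1 ->]] [s2 [h2 ->]]; exists (s1 ++ s2).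
by rewrite all_cat h1 h2 pprod_cat.
Qed.

Lemma AM_generated a : S \subset AM n -> generated S a -> a \in AM n.
Proof.
move=> /subsetP sS [s [+ ->]]; elim: s => [_ | b s IH /andP[bS hs]]; first exact: AM_pid.
by rewrite pprod_cons; apply: AM_pcomp; [apply: sS | apply: IH].
Qed.

End Generated.

Lemma sorted_enum A : sorted (relpre val ltn) (enum A).
Proof.
rewrite /enum_mem; apply: sorted_filter; first by move=> ? ? ?; apply: ltn_trans.
by rewrite -enumT -sorted_map val_enum_ord iota_ltn_sorted.
Qed.

Lemma sorted_enum_eq A s : sorted (relpre val ltn) s -> s =i A -> s = enum A.
Proof.
move=> ss sA; apply: (irr_sorted_eq (leT := relpre val ltn)) => //.
- by move=> ? ? ?; apply: ltn_trans.
- by move=> x; rewrite /= ltnn.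
- exact: sorted_enum.
- by move=> x; rewrite sA mem_enum.
Qed.

Lemma monotoneE a t : monotone t a -> a = mono_map (pdom a) (pimg a) t.
Proof.
move=> ta; pose f x := odflt x (a x).
have fE x : x \in pdom a -> a x = Some (f x) by move/pdomP=> [u]; rewrite /f => ->.
have f_mono (x y : 'I_n) : x \in pdom a -> y \in pdom a ->
    x < y -> if t then f y < f x else f x < f y.
  move=> /fE ax /fE ay.
  by case: t ta => /= [/order_reversingP | /order_preservingP] h; apply: h ax ay.
have mem_f : map f (enum (pdom a)) =i pimg a.
  move=> y; apply/mapP/pimgP => [[x] | [x ax]].
    by rewrite mem_enum => /fE ax ->; exists x.
  have xD : x \in pdom a by apply/pdomP; exists y.
  by exists x; rewrite ?mem_enum // /f ax.
have sorted_f : sorted (relpre val ltn) ((if t then rev else id) (map f (enum (pdom a)))).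
  have allD : all (mem (pdom a)) (enum (pdom a)) by apply/allP=> x; rewrite mem_enum.
  case: t {ta} f_mono => f_mono; rewrite /= ?rev_sorted sorted_map;
    by apply: (sub_in_sorted _ allD (sorted_enum _)) => x y xD yD /f_mono; apply.
have enum_f : (if t then rev else id) (map f (enum (pdom a))) = enum (pimg a).
  by apply: sorted_enum_eq sorted_f _ => y; case: (t); rewrite /= ?mem_rev mem_f.
apply/ffunP=> x; rewrite ffunE; case: ifP => [xD | /negbT xD].
  rewrite -enum_f (_ : (if t then _ else _) = map f (enum (pdom a))); last first.
    by case: (t); rewrite /= ?revK.
  by rewrite (nth_map x) ?index_mem ?mem_enum // nth_index ?mem_enum // fE.
by apply/eqP; move: xD; rewrite inE negbK.
Qed.

Lemma monotone_eq a b t : monotone t a -> monotone t b ->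
  pdom a = pdom b -> pimg a = pimg b -> a = b.
Proof. by move=> ta tb da ia; rewrite (monotoneE ta) (monotoneE tb) da ia. Qed.

Lemma mono_map_out A B t x : x \notin A -> mono_map A B t x = None.
Proof. by rewrite ffunE => /negbTE ->. Qed.

Lemma mono_map_id A : mono_map A A false = pid_on A.
Proof. by apply/ffunP=> x; rewrite !ffunE; case: ifP => // xA; rewrite nth_index ?mem_enum. Qed.

Lemma mono_map_enumE k (f g : 'I_k -> 'I_n) A B t x : injective f ->
    enum A = map f (enum 'I_k) -> enum B = map g (enum 'I_k) ->
  mono_map A B t (f x) = Some (g (if t then rev_ord x else x)).
Proof.
move=> f_inj eA eB; rewrite ffunE -mem_enum eA map_f ?mem_enum //.
rewrite index_map // index_enum_ord eB; case: t; last first.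
  by rewrite (nth_map x) ?size_enum_ord // nth_ord_enum.
rewrite nth_rev size_map ?size_enum_ord // -[k - x.+1]/(nat_of_ord (rev_ord x)).
by rewrite (nth_map x) ?size_enum_ord // nth_ord_enum.
Qed.

Lemma mono_mapT t x :
  mono_map [set: 'I_n] [set: 'I_n] t x = Some (if t then rev_ord x else x).
Proof. by rewrite -[x]/(id x) (mono_map_enumE (g := id)) // enum_setT -enumT map_id. Qed.

Lemma even_restr_unique a (p : {perm 'I_n}) :
    {in pdom a, forall x, a x = Some (p x)} -> n.-1 <= #|pdom a| ->
  even_restr a = ~~ odd_perm p.
Proof.
move=> ap big; apply/existsP/idP => [[s /andP[es /forallP sa]] | ep]; last first.
  exists p; rewrite ep; apply/forallP=> x; case: (boolP (x \in pdom a)) => [/ap -> | ].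
    by rewrite eqxx orbT.
  by rewrite inE negbK => ->.
suff -> : p = s by [].
apply/eqP; rewrite eq_sym eq_mulgV1; apply/eqP/(perm_on_id (S := ~: pdom a)).
  apply/subsetP=> x; rewrite inE in_setC permM; apply: contraNN => xD.
  by move: (sa x) (ap x xD) => /orP[/eqP-> // | /eqP-> [->]]; rewrite permK.
by have := cardsC (pdom a); rewrite card_ord; lia.
Qed.

End PartialInjections.

Definition rev_perm k : 'S_k := perm (@rev_ord_inj k).

Lemma rev_permE k x : rev_perm k x = rev_ord x.
Proof. by rewrite permE. Qed.

Lemma odd_rev_perm k : odd_perm (rev_perm k) = odd k./2.
Proof.
elim: k => [|k IH]; first by rewrite (_ : rev_perm 0 = 1%g) ?odd_perm1 //; apply/permP => -[].
have -> : rev_perm k.+1 = lift_perm ord0 ord_max (rev_perm k).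
  apply/permP => x; case: (unliftP ord0 x) => [y ->|->]; apply: val_inj.
    by rewrite lift_perm_lift !rev_permE /= /bump /=; have := ltn_ord y; lia.
  by rewrite lift_perm_id rev_permE /=; lia.
by rewrite odd_lift_perm IH /= uphalf_half oddD; case: (odd k).
Qed.

Lemma lift_ltn n (h : 'I_n) (x y : 'I_n.-1) : (lift h x < lift h y) = (x < y).
Proof. by rewrite /= !ltnNge leq_bump2. Qed.

Lemma rev_ord_ltn k (x y : 'I_k) : (rev_ord x < rev_ord y) = (y < x).
Proof. by rewrite /=; have := ltn_ord x; have := ltn_ord y; lia. Qed.

Definition adjacent (x y : nat) := (y == x.+1) || (x == y.+1).

Lemma bump_adjacent b c k k' : adjacent b c -> minn b c = k ->
  bump b k = c /\ (k' != k -> bump b k' = bump c k').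
Proof. by rewrite /adjacent /bump => /orP[/eqP|/eqP] -> <-; split; try case: leqP; lia. Qed.

Lemma bump_adjacent_swap i j k : adjacent i j ->
  bump j k = if bump i k == j then i else bump i k.
Proof. by rewrite /adjacent /bump => /orP[/eqP|/eqP] ->; case: eqP; lia. Qed.

Section Coatoms.
Variable m : nat.
Local Notation n := m.+1.
Implicit Types (i j l : 'I_n) (t : bool) (A : {set 'I_n}).

Lemma Xs_lift i k : lift i k \in Xs n i.
Proof. by rewrite inE (inj_eq val_inj) eq_sym neq_lift. Qed.

Lemma Xs_setC1 i : Xs n i = [set~ i].
Proof. by apply/setP=> x; rewrite !inE (inj_eq val_inj). Qed.

Lemma Xs_inj i j : Xs n i = Xs n j -> i = j.
Proof. by rewrite !Xs_setC1 => /setC_inj/set1_inj. Qed.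

Lemma Xs_eq i A : Xs n i \subset A -> i \notin A -> A = Xs n i.
Proof.
rewrite Xs_setC1 => sXA iA; apply/eqP; rewrite eqEsubset sXA andbT.
by apply/subsetP=> x xA; rewrite !inE; apply: contraNneq iA => <-.
Qed.

Lemma card_eq_Xs A : #|A| = m -> exists i, A = Xs n i.
Proof.
move=> cA; have /cards1P[i ei] : #|~: A| == 1.
  by apply/eqP; have := cardsC A; rewrite cA card_ord; lia.
by exists i; rewrite Xs_setC1 -ei setCK.
Qed.

Lemma enum_Xs i : enum (Xs n i) = map (lift i) (enum 'I_m).
Proof.
symmetry; apply: sorted_enum_eq.
  rewrite sorted_map; apply: (@sub_sorted _ (relpre val ltn)) => [x y | ].
    by rewrite /= lift_ltn.
  by rewrite enumT -enum_setT; apply: sorted_enum.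
move=> y; rewrite inE; apply/mapP/idP => [[k _ ->] | ].
  by have := Xs_lift i k; rewrite inE.
by case: (unliftP i y) => [k -> _ | ->]; [exists k; rewrite ?mem_enum | rewrite eqxx].
Qed.

Lemma mono_mapX i j t k :
  mono_map (Xs n i) (Xs n j) t (lift i k) = Some (lift j (if t then rev_ord k else k)).
Proof. by apply: mono_map_enumE; [exact: lift_inj | exact: enum_Xs | exact: enum_Xs]. Qed.

Lemma mono_mapX_out i j t : mono_map (Xs n i) (Xs n j) t i = None.
Proof. by rewrite mono_map_out // inE eqxx. Qed.

Lemma pdom_mono_mapX i j t : pdom (mono_map (Xs n i) (Xs n j) t) = Xs n i.
Proof.
apply/setP=> x; rewrite inE.
by case: (unliftP i x) => [k -> | ->]; rewrite ?mono_mapX ?Xs_lift // mono_mapX_out !inE !eqxx.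
Qed.

Lemma monotone_mono_mapX i j t : monotone t (mono_map (Xs n i) (Xs n j) t).
Proof.
have mapP x u : mono_map (Xs n i) (Xs n j) t x = Some u ->
    exists k, x = lift i k /\ u = lift j (if t then rev_ord k else k).
  by case: (unliftP i x) => [k -> | ->]; rewrite ?mono_mapX_out // mono_mapX => -[<-]; exists k.
case: t mapP => /= mapP; [apply/order_reversingP | apply/order_preservingP];
  by move=> x y u v /mapP[k [-> ->]] /mapP[k' [-> ->]]; rewrite !lift_ltn ?rev_ord_ltn.
Qed.

Lemma mono_mapX_pcomp i j l t1 t2 :
  pcomp (mono_map (Xs n i) (Xs n j) t1) (mono_map (Xs n j) (Xs n l) t2) =
  mono_map (Xs n i) (Xs n l) (t1 (+) t2).
Proof.
apply/ffunP=> x; rewrite pcompE; case: (unliftP i x) => [k -> | ->]; last by rewrite !mono_mapX_out.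
by rewrite !mono_mapX /= mono_mapX; case: t1; case: t2; rewrite /= ?rev_ordK.
Qed.

Lemma even_restr_mono_mapX i j t :
  even_restr (mono_map (Xs n i) (Xs n j) t) = (odd (i + j) == t && odd m./2).
Proof.
rewrite (@even_restr_unique _ _ (lift_perm i j (if t then rev_perm m else 1%g))).
- by rewrite odd_lift_perm oddD; case: t; rewrite ?odd_rev_perm ?odd_perm1;
    case: (odd i); case: (odd j); case: (odd m./2).
- move=> x; rewrite pdom_mono_mapX; case: (unliftP i x) => [k -> _ | ->]; last by rewrite inE eqxx.
  by rewrite mono_mapX lift_perm_lift; case: (t); rewrite ?rev_permE ?perm1.
- by rewrite pdom_mono_mapX Xs_setC1 cardsC1 card_ord.
Qed.

Definition shift i j := mono_map (Xs n i) (Xs n j) false.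

Lemma shift_adjacentE i j x : adjacent i j ->
  shift i j x = if x == i then None else Some (if x == j then i else x).
Proof.
move=> ij; case: (unliftP i x) => [k -> | ->]; last by rewrite mono_mapX_out eqxx.
rewrite mono_mapX lift_eqF; congr Some; apply: val_inj.
by rewrite /= (bump_adjacent_swap _ ij) -(inj_eq val_inj); case: eqP.
Qed.

Lemma pcomp_shift_adjacent i j (b c : 'I_n) (k : 'I_m) : adjacent b c -> minn b c = k ->
  pcomp (shift i b) (shift c j) = pcomp (pid_on (Xs n (lift i k))) (shift i j).
Proof.
move=> bc bck; apply/ffunP=> x; rewrite pcompE pcomp_pid_onE.
case: (unliftP i x) => [k' -> | ->]; last by rewrite !mono_mapX_out if_same.
have [bk bk'] := bump_adjacent k' bc bck.
rewrite !mono_mapX /= inE -[bump i k]/(val (lift i k)) (inj_eq val_inj) (inj_eq (@lift_inj _ i)).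
case: eqVneq => [-> | k'k].
  by rewrite (_ : lift b k = c) ?mono_mapX_out //; apply: val_inj.
by rewrite (_ : lift b k' = lift c k') ?mono_mapX //; apply: val_inj; rewrite /= bk'.
Qed.

End Coatoms.

Section Generation.
Variable m : nat.
Local Notation n := m.+1.
Hypothesis n_mod4 : n %% 4 = 3.
Implicit Types (i j l : 'I_n) (a : PT n) (A D I : {set 'I_n}).

Lemma odd_m : odd m = false.
Proof. by move: n_mod4; lia. Qed.

Lemma odd_half_m : odd m./2.
Proof. by move: n_mod4; lia. Qed.

Lemma odd_half_n : odd n./2.
Proof. by move: n_mod4; lia. Qed.

Definition ymap i j := mono_map (Xs n i) (Xs n j) (odd (i + j)).

Lemma AM_mono_mapX i j t : (mono_map (Xs n i) (Xs n j) t \in AM n) = (t == odd (i + j)).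
Proof.
have tX := monotone_mono_mapX i j t.
apply/AMP/eqP => [[_ + _] | et]; first by rewrite even_restr_mono_mapX odd_half_m andbT => /eqP.
split; [exact: monotone_pinj tX | | by exists t].
by rewrite even_restr_mono_mapX odd_half_m andbT et.
Qed.

Lemma AM_ymap i j : ymap i j \in AM n.
Proof. by rewrite AM_mono_mapX. Qed.

Lemma ymap_pcomp i j l : pcomp (ymap i j) (ymap j l) = ymap i l.
Proof.
rewrite /ymap mono_mapX_pcomp !oddD.
by case: (odd i); case: (odd j); case: (odd l).
Qed.

Lemma ygenE i : ygen n i = ymap i (ordS i).
Proof.
rewrite /ygen /ymap /=; case: ltnP => [lt_i1n | ]; last first.
  move=> le_ni1; have ei : (i : nat) = m by have := ltn_ord i; lia.
  by rewrite ei modnn addn0 odd_m.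
by rewrite modn_small // oddD /=; case: (odd i).
Qed.

Lemma generated_ymap i j : generated (Ygens n) (ymap i j).
Proof.
have gen_ygen i' : generated (Ygens n) (ymap i' (ordS i')).
  by rewrite -ygenE; apply/generated_mem/imsetP; exists i'.
have gen_iter d i' : generated (Ygens n) (ymap i' (iter d.+1 (@ordS n) i')).
  elim: d i' => [|d IH] i' //; rewrite -(ymap_pcomp i' (ordS i')) iterSr.
  exact: generated_pcomp.
have val_iter d : val (iter d (@ordS n) i) = (i + d) %% n.
  elim: d => [|d IH] /=; first by rewrite addn0 modn_small.
  by rewrite IH addnS -addn1 modnDml addn1.
have -> : j = iter (j + n - i) (@ordS n) i.
  apply: val_inj; rewrite val_iter subnKC ?modnDr ?modn_small //.
  by rewrite ltnW // ltn_addl.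
by rewrite -(prednK (_ : 0 < j + n - i)) ?subn_gt0 ?ltn_addl.
Qed.

Lemma ymap_id i : ymap i i = pid_on (Xs n i).
Proof. by rewrite /ymap addnn odd_double mono_map_id. Qed.

Lemma generated_pid_on A : generated (Ygens n) (pid_on A).
Proof.
suff gen_seq (s : seq 'I_n) : generated (Ygens n) (pid_on [set y | y \notin s]).
  rewrite (_ : A = [set y | y \notin enum (~: A)]) //.
  by apply/setP=> y; rewrite !inE mem_enum inE negbK.
elim: s => [|x s IH].
  rewrite (_ : [set y | _] = setT) ?pid_onT; first exact: generated_pid.
  by apply/setP=> y; rewrite !inE.
rewrite (_ : [set y | _] = Xs n x :&: [set y | y \notin s]); last first.
  by apply/setP=> y; rewrite !inE (inj_eq val_inj) negb_or.
by rewrite -pid_on_pcomp -ymap_id; apply: generated_pcomp IH; apply: generated_ymap.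
Qed.

Lemma AM_pdomT a : a \in AM n -> pdom a = [set: 'I_n] -> a = pid n.
Proof.
move=> /AMP[ia ea [t ta]] aT.
have aimg : pimg a = [set: 'I_n].
  by apply/eqP; rewrite eqEcard subsetT -card_pdom_pimg ?aT /=.
case: t ta => ta; last by rewrite (monotoneE ta) aT aimg mono_map_id pid_onT.
have aE x : a x = Some (rev_ord x) by rewrite (monotoneE ta) aT aimg mono_mapT.
move: ea; rewrite (@even_restr_unique _ a (rev_perm n)) ?odd_rev_perm ?odd_half_n //.
- by move=> x _; rewrite aE rev_permE.
- by rewrite aT cardsT card_ord leq_pred.
Qed.

Lemma generated_shift_on A i j :
  #|i |: A| < n -> generated (Ygens n) (pcomp (pid_on A) (shift i j)).
Proof.
move=> small; case: (boolP (odd (i + j))) => oij; last first.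
  rewrite /shift -(negbTE oij).
  by apply: generated_pcomp; [apply: generated_pid_on | apply: generated_ymap].
have [h hA hi] : exists2 h, h \notin A & h != i.
  have /card_gt0P[h] : 0 < #|~: (i |: A)| by have := cardsC (i |: A); rewrite card_ord; lia.
  by rewrite !inE negb_or => /andP[hi hA]; exists h.
case: (unliftP i h) hA hi => [k -> hA _ | ->]; last by rewrite eqxx.
(* For odd i + j the shift is not in AM_n, but its restriction to X_i minus
   the point h = lift i k is the product of two y-maps through {k, k + 1}. *)
have [b [c [bc bck ib cj]]] : exists b c : 'I_n,
    [/\ adjacent b c, minn b c = k, odd (i + b) = false & odd (c + j) = false].
  pose kl := widen_ord (leqnSn m) k; pose kr : 'I_n := lift ord0 k.
  by case: (boolP (odd (i + k))) => ik; [exists kr, kl | exists kl, kr];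
    split; rewrite /adjacent /kl /kr /= /bump ?leq0n; try lia;
    by move: oij ik; rewrite !oddD /=; case: (odd i); case: (odd j); case: (odd k).
have shift_ymap (x y : 'I_n) : odd (x + y) = false -> shift x y = ymap x y by rewrite /ymap => ->.
have -> : pcomp (pid_on A) (shift i j) =
    pcomp (pid_on A) (pcomp (ymap i b) (ymap c j)).
  rewrite -shift_ymap // -shift_ymap // (pcomp_shift_adjacent _ _ bc bck) pcompA pid_on_pcomp.
  congr (pcomp (pid_on _) _); apply/esym/setIidPl/subsetP=> x xA; rewrite inE.
  by apply: contraNneq hA => /val_inj <-.
apply: generated_pcomp; first exact: generated_pid_on.
by apply: generated_pcomp; apply: generated_ymap.
Qed.


Definition realizable t D I := exists g,
  [/\ generated (Ygens n) g, monotone t g, pdom g = D & pimg g = I].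

Lemma realizable_trans t1 t2 D J I :
  realizable t1 D J -> realizable t2 J I -> realizable (t1 (+) t2) D I.
Proof.
move=> [g1 [G1 t1g1 d1 i1]] [g2 [G2 t2g2 d2 i2]]; exists (pcomp g1 g2); split.
- exact: generated_pcomp.
- exact: monotone_pcomp.
- by rewrite pdom_pcomp // i1 d2.
- by rewrite pimg_pcomp // i1 d2.
Qed.

Lemma realizable_restr t g A : generated (Ygens n) (pcomp (pid_on A) g) ->
  monotone t g -> A \subset pdom g -> realizable t A (pimg (pcomp (pid_on A) g)).
Proof.
move=> gen tg Ag; exists (pcomp (pid_on A) g); split => //.
- exact: monotone_pcomp (monotone_pid_on A) tg.
- by rewrite pdom_pcomp ?pdom_pid_on ?pimg_pid_on.
Qed.

Lemma realizable_id A : realizable false A A.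
Proof.
have := @realizable_restr false (pid n) A; rewrite pcomp_pidr pimg_pid_on.
apply; [exact: generated_pid_on | | by rewrite -pid_onT pdom_pid_on subsetT].
by rewrite -pid_onT; apply: monotone_pid_on.
Qed.

Lemma realizable_swap D i j : adjacent i j -> i \notin D -> j \in D ->
  #|i |: D| < n -> realizable false D (i |: D :\ j).
Proof.
move=> ij iD jD small.
have neq_i x : x \in D -> (x == i) = false by move=> xD; apply/negbTE; apply: contraNneq iD => <-.
have DX : D \subset pdom (shift i j).
  by apply/subsetP=> x xD; rewrite pdom_mono_mapX Xs_setC1 !inE neq_i.
suff <- : pimg (pcomp (pid_on D) (shift i j)) = i |: D :\ j.
  exact: realizable_restr (generated_shift_on j small) (monotone_mono_mapX i j false) DX.
apply/setP=> y; apply/pimgP/idP => [[x] | ].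
  rewrite pcomp_pid_onE shift_adjacentE //; case: ifP => // xD; rewrite neq_i //.
  by case: eqVneq => [_ [<-] | xj [<-]]; rewrite !inE ?eqxx // xj xD orbT.
rewrite !inE => /orP[/eqP -> | /andP[yj yD]].
  by exists j; rewrite pcomp_pid_onE jD shift_adjacentE // neq_i // eqxx.
by exists y; rewrite pcomp_pid_onE yD shift_adjacentE // neq_i // (negbTE yj).
Qed.

Definition iseg k : {set 'I_n} := [set x : 'I_n | x < k].

Lemma card_iseg k : k <= n -> #|iseg k| = k.
Proof.
elim: k => [|k IH] lt_kn; first by apply/eqP; rewrite cards_eq0; apply/eqP/setP=> x; rewrite !inE.
have -> : iseg k.+1 = Ordinal lt_kn |: iseg k.
  by apply/setP=> x; rewrite !inE -(inj_eq val_inj) /= ltnS leq_eqVlt.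
by rewrite cardsU1 IH ?(ltnW lt_kn) // inE ltnn.
Qed.

Lemma exists_gap D : D != iseg #|D| ->
  [exists g : 'I_n, exists g1 : 'I_n, [&& (g1 : nat) == g.+1, g \notin D & g1 \in D]].
Proof.
apply: contraNT => /existsPn no_gap.
have down d (x y : 'I_n) : (y : nat) = x + d -> y \in D -> x \in D.
  elim: d y => [|d IH] y yxd yD; first by have -> : x = y by apply/val_inj => /=; rewrite yxd addn0.
  have lt_z : x + d < n by have := ltn_ord y; lia.
  apply: (IH (Ordinal lt_z)) => //; apply: contraT => zD.
  by move/existsPn: (no_gap (Ordinal lt_z)) => /(_ y); rewrite /= yxd addnS eqxx zD yD.
have sub : D \subset iseg #|D|.
  apply/subsetP=> y yD; rewrite inE -[y.+1]card_iseg ?ltn_ord //.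
  apply/subset_leq_card/subsetP=> x; rewrite inE ltnS => xy.
  by apply: (down (y - x) x y) => //; rewrite subnKC.
have le_Dn : #|D| <= n by have := max_card D; rewrite card_ord.
by rewrite eqEcard sub card_iseg ?leqnn.
Qed.

Lemma realizable_iseg D : #|D| < m ->
  realizable false D (iseg #|D|) /\ realizable false (iseg #|D|) D.
Proof.
(* Induction on the sum of the elements of D, which each slide lowers. *)
move: (ltnSn (\sum_(x in D) (x : nat))); move: {2}(_.+1) => s.
elim: s D => // s IH D lt_sum small.
case: (eqVneq D (iseg #|D|)) => [<- | /exists_gap]; first by split; apply: realizable_id.
case/existsP => g /existsP[g1 /and3P[/eqP g1v gD g1D]].
have adj_gg1 : adjacent g g1 by rewrite /adjacent g1v eqxx.
have adj_g1g : adjacent g1 g by rewrite /adjacent g1v eqxx orbT.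
have neq_g1g : g1 != g by apply/negP => /eqP e; move: g1v; rewrite e; lia.
have g1D' : g1 \notin g |: D :\ g1 by rewrite !inE eqxx /= orbF.
have gD' : g \notin D :\ g1 by rewrite inE (negbTE gD) andbF.
have cD' : #|g |: D :\ g1| = #|D| by rewrite cardsU1 gD' (cardsD1 g1 D) g1D.
have sum' : \sum_(x in g |: D :\ g1) (x : nat) < s.
  by move: lt_sum; rewrite (big_setD1 g1 g1D) big_setU1 //= g1v addSn ltnS.
have [toI fromI] : realizable false (g |: D :\ g1) (iseg #|D|) /\
                   realizable false (iseg #|D|) (g |: D :\ g1).
  by rewrite -cD'; apply: IH; rewrite ?cD'.
split.
- apply: (@realizable_trans false false _ _ _ _ toI).
  by apply: realizable_swap => //; rewrite cardsU1 gD add1n ltnS.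
- apply: (@realizable_trans false false _ _ _ fromI).
  rewrite -{2}(_ : g1 |: (g |: D :\ g1) :\ g = D).
    by apply: realizable_swap => //; rewrite ?setU11 // cardsU1 g1D' cD' add1n ltnS.
  apply/setP=> x; rewrite !inE; case: (eqVneq x g1) => [-> | xg1]; first by rewrite g1D.
  by case: (eqVneq x g) => [-> | //]; rewrite (negbTE gD).
Qed.

Lemma realizable_small t D I : #|D| = #|I| -> #|D| < m -> realizable t D I.
Proof.
move=> DI small; have [toI _] := realizable_iseg small.
have smallI : #|I| < m by rewrite -DI.
have [_ fromI] := realizable_iseg smallI; rewrite -DI in fromI.
case: t; last exact: (@realizable_trans false false _ _ _ toI fromI).
have lt1n : 1 < n by lia.
pose r := ymap ord_max (Ordinal lt1n).
have r_rev : monotone true r.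
  have -> : true = odd ((ord_max : 'I_n) + Ordinal lt1n) by rewrite /= addn1 /= odd_m.
  exact: monotone_mono_mapX.
have sub : iseg #|D| \subset pdom r.
  apply/subsetP=> x; rewrite pdom_mono_mapX Xs_setC1 !inE => xD.
  by apply: contraTneq xD => ->; rewrite -leqNgt ltnW.
have gen_r : generated (Ygens n) (pcomp (pid_on (iseg #|D|)) r).
  by apply: generated_pcomp; [apply: generated_pid_on | apply: generated_ymap].
have := realizable_restr gen_r r_rev sub; set B := pimg _ => toB.
have cB : #|B| = #|D|.
  rewrite /B -card_pdom_pimg ?pdom_pcomp ?pdom_pid_on ?pimg_pid_on ?card_iseg //.
    exact: leqW (ltnW small).
  exact: monotone_pinj (monotone_pcomp (monotone_pid_on _) r_rev).
have smallB : #|B| < m by rewrite cB.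
have [fromB _] := realizable_iseg smallB; rewrite cB in fromB.
apply: (@realizable_trans false true _ _ _ toI).
apply: (@realizable_trans true false _ _ _ toB).
exact: (@realizable_trans false false _ _ _ fromB fromI).
Qed.

Lemma generated_AM a : a \in AM n -> generated (Ygens n) a.
Proof.
move=> aAM; have /AMP[ia _ [t ta]] := aAM.
have cDI := card_pdom_pimg ia.
case: (ltngtP #|pdom a| m) => [small | big | rank_m].
- have [g [gen tg dg ig]] := realizable_small t cDI small.
  by rewrite (monotone_eq ta tg) ?dg ?ig.
- rewrite (AM_pdomT aAM); first exact: generated_pid.
  by apply/eqP; rewrite eqEcard subsetT cardsT card_ord.
- have [i di] := card_eq_Xs rank_m; have [j ij] := card_eq_Xs (etrans (esym cDI) rank_m).
  have aE := monotoneE ta; rewrite di ij in aE.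
  have /eqP et : t == odd (i + j) by rewrite -AM_mono_mapX -aE.
  by rewrite aE et; apply: generated_ymap.
Qed.

Lemma Ygens_sub_AM : Ygens n \subset AM n.
Proof. by apply/subsetP=> y /imsetP[i _ ->]; rewrite ygenE AM_ymap. Qed.

Lemma generates_Ygens : generates (Ygens n) (AM n).
Proof.
split=> [|a]; first exact: Ygens_sub_AM.
by split; [apply: generated_AM | apply: AM_generated Ygens_sub_AM].
Qed.

Lemma pdom_ygen i : pdom (ygen n i) = Xs n i.
Proof. by rewrite ygenE pdom_mono_mapX. Qed.

Lemma card_Ygens : #|Ygens n| = n.
Proof.
rewrite card_imset ?card_ord // => i j /(congr1 (@pdom n)).
by rewrite !pdom_ygen => /Xs_inj.
Qed.

Lemma generating_pdom_Xs S i :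
  generates S (AM n) -> exists2 c, c \in S & pdom c = Xs n i.
Proof.
move=> [sS genS]; have [s [sS' ygen_s]] := (genS _).1 (AM_ymap i (ordS i)).
have : pprod s != pid n.
  by rewrite -ygen_s; apply/eqP => /ffunP/(_ i); rewrite mono_mapX_out ffunE.
case/pprod_nontrivial_factor => c cs /andP[c1 sub]; exists c; first exact: (allP sS').
rewrite -ygen_s pdom_mono_mapX in sub; apply: (Xs_eq sub).
apply: contra c1 => ic; apply/eqP/(AM_pdomT (subsetP sS c (allP sS' c cs))).
apply/setP=> x; rewrite in_setT; case: (eqVneq x i) => [-> // | xi].
by apply: (subsetP sub); rewrite Xs_setC1 !inE.
Qed.

Lemma generating_card S : generates S (AM n) -> n <= #|S|.
Proof.
move=> genS; pose f (c : PT n) : 'I_n := odflt ord0 [pick i : 'I_n | pdom c == Xs n i].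
have onto : [set: 'I_n] \subset f @: S.
  apply/subsetP=> i _; have [c cS dc] := generating_pdom_Xs i genS.
  apply/imsetP; exists c => //; rewrite /f; case: pickP => [j /eqP | /(_ i)].
    by rewrite dc => /Xs_inj.
  by rewrite dc eqxx.
by rewrite -{1}(card_ord n) -cardsT (leq_trans (subset_leq_card onto)) ?leq_imset_card.
Qed.

End Generation.

Theorem theorem5p8 (n : nat) (hn : n %% 4 = 3) :
  generates (Ygens n) (AM n) /\ #|Ygens n| = n /\
  (forall S : {set PT n}, generates S (AM n) -> n <= #|S|).
Proof.
case: n hn => [|m] // hn.
split; [exact: generates_Ygens | split; [exact: card_Ygens | exact: generating_card]].
Qed.
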